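(* Let $(X,d)$ be a bounded metric space and $\lambda\ge0$. Let $\ell,\ell_n:X\to[0,+\infty)$ ($n\in\mathbb{N}$) be lower semicontinuous with $\inf_X\ell=\inf_X\ell_n=0$, and assume $\ell$ is bounded. Let $u$ and $u_n$ be the Perron solutions of $(\mathcal{G}_\lambda)$ associated with $\ell$ and $\ell_n$, respectively. If $\ell_n\to\ell$ uniformly, then $u_n\to u$ uniformly.
   Context: Global slope: $G[u](x)=\sup_{y\neq x}\frac{(u(x)-u(y))_+}{d(x,y)}$ if $u(x)<+\infty$, $G[u](x)=+\infty$ otherwise. A solution of $(\mathcal{G}_\lambda)$ with data $\ell$ is a lower semicontinuous $u$ with $\inf_Xu=0$ and $\lambda u+G[u]=\ell$ on $X$; the Perron solution is the solution that is pointwise maximal among all solutions. *)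

From HB Require Import structures.
From mathcomp Require Import all_boot all_order all_algebra.
From mathcomp Require Import all_classical all_reals ereal.
Set Implicit Arguments. Unset Strict Implicit. Unset Printing Implicit Defensive.
Import Order.TTheory GRing.Theory Num.Theory.
Local Open Scope classical_set_scope.
Local Open Scope ring_scope.

Section Defs.
Variables (R : realType) (X : Type) (d : X -> X -> R).

Definition is_metric : Prop :=
  (forall x y, 0 <= d x y) /\ (forall x y, d x y = 0 <-> x = y) /\
  (forall x y, d x y = d y x) /\ (forall x y z, d x z <= d x y + d y z).

Definition bounded_metric : Prop := exists M : R, forall x y, d x y <= M.

Definition lsc_real (f : X -> R) : Prop :=
  forall x (t : R), t < f x ->
    exists2 del : R, 0 < del & forall y, d x y < del -> t < f y.

Definition lsc_ext (f : X -> \bar R) : Prop :=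
  forall x (t : R), (t%:E < f x)%E ->
    exists2 del : R, 0 < del & forall y, d x y < del -> (t%:E < f y)%E.

(* The supremum is taken together with 0 (harmless since the quotients are
   nonnegative; fixes the convention sup(empty) = 0 for a one-point space). *)
Definition gslope (u : X -> \bar R) (x : X) : \bar R :=
  if u x == +oo%E then +oo%E
  else ereal_sup ([set 0%E] `|`
         [set (maxe (u x - u y) 0 * ((d x y)^-1)%:E)%E | y in [set y | y <> x]]).

Definition is_solution (lam : R) (l : X -> R) (u : X -> \bar R) : Prop :=
  lsc_ext u /\ ereal_inf (range u) = 0%E /\
  forall x, (lam%:E * u x + gslope u x)%E = (l x)%:E.

Definition is_perron (lam : R) (l : X -> R) (u : X -> \bar R) : Prop :=
  is_solution lam l u /\
  forall v, is_solution lam l v -> forall x, (v x <= u x)%E.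

End Defs.

Definition unif_conv_real (R : realType) (X : Type) (f : nat -> X -> R) (g : X -> R) :=
  forall e : R, 0 < e -> exists N : nat, forall n, (N <= n)%N -> forall x, `|f n x - g x| < e.

Definition unif_conv_ext (R : realType) (X : Type) (f : nat -> X -> \bar R) (g : X -> \bar R) :=
  forall e : R, 0 < e -> exists N : nat, forall n, (N <= n)%N -> forall x,
    (`|f n x - g x| < e%:E)%E.

(* Perron's method: the Perron solution is the supremum U of all real
   subsolutions (lsc, infimum 0, v x - v y <= (l x - lam v x) d x y).  Were the
   slope of U at some point below l - lam U, a small cone raised above U there
   would still be a subsolution, so U solves the equation and dominates every
   subsolution.  Stability: if l' >= l - eps, the truncation (1 - del) (v - a)_+
   of an l-subsolution v is an l'-subsolution as soon as eps D <= del a, where D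
   bounds d, because subsolutions satisfy v <= l D.  Hence u - u' <= del u + a,
   and u <= (sup l) D makes this small for small eps. *)

From HB Require Import structures.
From mathcomp Require Import all_boot all_order all_algebra.
From mathcomp Require Import all_classical all_reals ereal.
From mathcomp Require Import ring lra.
Import Order.TTheory GRing.Theory Num.Theory.
Local Open Scope classical_set_scope.
Local Open Scope ring_scope.
Set Implicit Arguments. Unset Strict Implicit. Unset Printing Implicit Defensive.

Lemma ler_addgt0Mr (R : realFieldType) (a b c : R) :
  0 <= c -> (forall e, 0 < e -> a <= b + c * e) -> a <= b.
Proof.
move=> c_ge0 le_ab; apply/ler_addgt0Pr => e e_gt0.
have c1_gt0 : 0 < c + 1 by lra.
apply: (le_trans (le_ab (e / (c + 1)) _)); first by rewrite divr_gt0.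
rewrite lerD2l mulrA ler_pdivrMr //; nra.
Qed.

Lemma bounded_metric_pos (R : realType) (X : Type) (d : X -> X -> R) :
  bounded_metric d -> exists2 D, 0 < D & forall x y, d x y <= D.
Proof.
move=> [D0 d_le_D0]; exists (Num.max D0 1); first by rewrite lt_max ltr01 orbT.
by move=> x y; rewrite le_max d_le_D0.
Qed.

Lemma ereal_inf_range_eq0P (R : realType) (X : Type) (f : X -> R) :
  ereal_inf (range (fun x => (f x)%:E)) = 0%E <->
  (forall x, 0 <= f x) /\ (forall e, 0 < e -> exists x, f x < e).
Proof.
split=> [inf0|[f_ge0 f_inf]].
  split=> [x|e e0].
    have := @ereal_inf_lbound _ (range (fun x => (f x)%:E)) _ (ex_intro2 _ _ x I erefl).
    by rewrite inf0 lee_fin.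
  have /ereal_inf_lt[_ [x _ <-]] : (ereal_inf (range (fun x => (f x)%:E)) < e%:E)%E.
    by rewrite inf0 lte_fin.
  by rewrite lte_fin; exists x.
apply/eqP; rewrite eq_le; apply/andP; split.
  apply/lee_addgt0Pr => e /f_inf[x fx]; rewrite add0e.
  by apply: ge_ereal_inf; exists (f x)%:E; [exists x | rewrite lee_fin ltW].
by apply: le_ereal_inf_tmp => _ [x _ <-]; rewrite lee_fin.
Qed.

Lemma lsc_real_shrink (R : realType) (X : Type) (d : X -> X -> R) (v : X -> R) (c a : R) :
  0 < c -> lsc_real d v -> lsc_real d (fun x => c * Num.max (v x - a) 0).
Proof.
move=> c0 v_lsc x t /=.
have w_ge0 y : 0 <= c * Num.max (v y - a) 0.
  by apply: mulr_ge0; [exact: ltW | rewrite le_max lexx orbT].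
case: (lerP (v x - a) 0) => [_|_].
  by rewrite mulr0 => t0; exists 1 => // y _; apply: lt_le_trans (w_ge0 y).
rewrite -ltr_pdivrMl // ltrBrDr => /v_lsc[del del0 Hdel]; exists del => // y /Hdel.
move=> lt_ty; apply: (@lt_le_trans _ _ (c * (v y - a))).
  by rewrite -ltr_pdivrMl // ltrBrDr.
by rewrite ler_pM2l // le_max lexx.
Qed.

Lemma gslope_ge0 (R : realType) (X : Type) (d : X -> X -> R) (u : X -> \bar R) x :
  (0 <= gslope d u x)%E.
Proof.
rewrite /gslope; case: ifP => // _.
by apply: ereal_sup_ubound; left.
Qed.

Section Subsolutions.
Variables (R : realType) (X : Type) (d : X -> X -> R).
Hypothesis d_metric : is_metric d.

Lemma metric_ge0 x y : 0 <= d x y. Proof. by case: d_metric. Qed.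
Lemma metric_xx x : d x x = 0. Proof. by case: d_metric => _ [/(_ x x) [_ ->]]. Qed.
Lemma metric_triangle x y z : d x z <= d x y + d y z.
Proof. by case: d_metric => _ [_ []]. Qed.

Lemma metric_gt0 x y : y <> x -> 0 < d x y.
Proof.
move=> yx; rewrite lt_neqAle metric_ge0 andbT; apply/eqP => dxy0.
by case: d_metric => _ [/(_ x y) [/(_ (esym dxy0)) xy _] _]; apply: yx.
Qed.

Lemma gslope_EFin_leP (v : X -> R) x k : 0 <= k ->
  (gslope d (fun y => (v y)%:E) x <= k%:E)%E <-> forall y, v x - v y <= k * d x y.
Proof.
move=> k_ge0; rewrite /gslope /=; split=> [slope_le y|Lv].
  have [->|yx] := pselect (y = x); first by rewrite metric_xx subrr mulr0.
  have dxy_gt0 := metric_gt0 yx.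
  have : (Num.max (v x - v y) 0 / d x y <= k)%R.
    rewrite -lee_fin; apply: le_trans slope_le; apply: ereal_sup_ubound; right.
    by exists y => //; rewrite EFinM EFin_max.
  by rewrite ler_pdivrMr // => /(le_trans _); apply; rewrite le_max lexx.
apply: ge_ereal_sup => _ [->|[y yx <-]]; first by rewrite lee_fin.
rewrite -EFin_max -EFinM lee_fin ler_pdivrMr ?metric_gt0 // ge_max Lv /=.
by rewrite mulr_ge0 ?metric_ge0.
Qed.

Lemma lsc_ext_EFinP (v : X -> R) : lsc_ext d (fun x => (v x)%:E) <-> lsc_real d v.
Proof.
split=> v_lsc x t; rewrite ?lte_fin => /v_lsc[del del0 Hdel];
  by exists del => // y; rewrite ?lte_fin => /Hdel; rewrite ?lte_fin.
Qed.

Variable lam : R.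
Hypothesis lam_ge0 : 0 <= lam.

(* Real-valued subsolutions of (G_lam) with infimum 0: the slope field is
   G[v] <= l - lam v with the supremum unfolded. *)
Record subsolution (l v : X -> R) : Prop := Subsolution {
  subsolution_lsc : lsc_real d v;
  subsolution_ge0 : forall x, 0 <= v x;
  subsolution_lam : forall x, lam * v x <= l x;
  subsolution_slope : forall x y, v x - v y <= (l x - lam * v x) * d x y;
  subsolution_inf : forall e, 0 < e -> exists x, v x < e }.

Lemma solution_fin l u : is_solution d lam l u -> forall x, u x = (fine (u x))%:E.
Proof.
move=> [_ [inf0 u_eq]] x.
have : (0 <= u x)%E by rewrite -inf0; apply: ereal_inf_lbound; exists x.
case E: (u x) => [r| |] //= _.
have := u_eq x; rewrite /gslope E eqxx addey //.
have : (0 <= lam%:E * +oo)%E by apply: mule_ge0; rewrite ?lee_fin ?leey.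
by case: (_ * _)%E.
Qed.

Lemma solution_subsolution l v :
  is_solution d lam l (fun x => (v x)%:E) -> subsolution l v.
Proof.
move=> [/lsc_ext_EFinP v_lsc [/ereal_inf_range_eq0P [v_ge0 v_inf] v_eq]].
have slope_eq x : gslope d (fun y => (v y)%:E) x = (l x - lam * v x)%:E.
  move: (v_eq x) (gslope_ge0 d (fun y => (v y)%:E) x).
  case: gslope => [r| |] // [<-] _.
  by rewrite addrAC subrr add0r.
have lv_ge0 x : 0 <= l x - lam * v x.
  by rewrite -lee_fin -slope_eq gslope_ge0.
split=> // [x|x y]; first by rewrite -subr_ge0.
by apply: (gslope_EFin_leP v x (lv_ge0 x)).1 y; rewrite slope_eq.
Qed.

Lemma solution_fine_subsolution l u :
  is_solution d lam l u -> subsolution l (fun x => fine (u x)).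
Proof.
move=> u_sol; apply: solution_subsolution.
by rewrite -(funext (solution_fin u_sol)).
Qed.

Lemma subsolution_solution l v : subsolution l v ->
  (forall x k, 0 <= k -> (forall y, v x - v y <= k * d x y) -> l x - lam * v x <= k) ->
  is_solution d lam l (fun x => (v x)%:E).
Proof.
move=> vs slope_ge.
have slope_eq x : gslope d (fun y => (v y)%:E) x = (l x - lam * v x)%:E.
  have lv_ge0 : 0 <= l x - lam * v x by rewrite subr_ge0 (subsolution_lam vs).
  move: ((gslope_EFin_leP v x lv_ge0).2 (subsolution_slope vs x)).
  move: (gslope_ge0 d (fun y => (v y)%:E) x).
  case E: gslope => [k| |] //; rewrite !lee_fin => k_ge0 k_le.
  apply/eqP; rewrite eq_le lee_fin k_le lee_fin slope_ge //.
  by apply/(gslope_EFin_leP v x k_ge0); rewrite E.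
split; first exact/lsc_ext_EFinP/(subsolution_lsc vs).
split; first exact/ereal_inf_range_eq0P/(conj (subsolution_ge0 vs) (subsolution_inf vs)).
by move=> x; rewrite slope_eq -EFinM -EFinD addrC subrK.
Qed.

Variable D : R.
Hypothesis D_gt0 : 0 < D.
Hypothesis d_le_D : forall x y, d x y <= D.

Lemma subsolution_le l v : subsolution l v -> forall x, v x <= l x * D.
Proof.
move=> vs x; apply/ler_addgt0Pr => e /(subsolution_inf vs)[y vy_lt].
have lv_ge0 : 0 <= l x - lam * v x by rewrite subr_ge0 (subsolution_lam vs).
have lv_le : l x - lam * v x <= l x by rewrite gerBl mulr_ge0 ?(subsolution_ge0 vs).
have : (l x - lam * v x) * d x y <= l x * D.
  by rewrite ler_pM ?metric_ge0.
have := subsolution_slope vs x y; lra.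
Qed.

Lemma solution_fine_le l u : is_solution d lam l u -> forall x, fine (u x) <= l x * D.
Proof. by move=> /solution_fine_subsolution /subsolution_le. Qed.

Lemma subsolution_shrink l1 l2 v (del a eps : R) :
  subsolution l1 v -> (forall x, 0 <= l2 x) -> (forall x, l1 x - eps <= l2 x) ->
  0 < del -> del < 1 -> 0 <= a -> eps * D <= del * a ->
  subsolution l2 (fun x => (1 - del) * Num.max (v x - a) 0).
Proof.
move=> vs l2_ge0 l12 del_gt0 del_lt1 a_ge0 epsD.
have c_gt0 : 0 < 1 - del by rewrite subr_gt0.
have w_ge0 y : 0 <= (1 - del) * Num.max (v y - a) 0.
  by apply: mulr_ge0; [exact: ltW | rewrite le_max lexx orbT].
have w_ge y : (1 - del) * (v y - a) <= (1 - del) * Num.max (v y - a) 0.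
  by rewrite ler_pM2l // le_max lexx.
(* Where the truncation is active, [a < v x <= l1 x * D] bounds the loss
   [eps] by [del * l1 x]. *)
have l1_shrink x : a < v x -> (1 - del) * l1 x <= l2 x.
  move=> a_lt; have vx_le := subsolution_le vs x.
  have : eps * D <= del * l1 x * D.
    by apply: (le_trans epsD); rewrite -mulrA ler_pM2l // ltW // (lt_le_trans a_lt).
  rewrite ler_pM2r // => eps_le; have := l12 x; lra.
have lam_a_ge0 : 0 <= (1 - del) * (lam * a) by rewrite !mulr_ge0 // ltW.
split=> [||x|x y|e e_gt0].
- exact: lsc_real_shrink (subsolution_lsc vs).
- exact: w_ge0.
- case: (lerP (v x - a) 0) => [_|]; first by rewrite !mulr0.
  rewrite subr_gt0 => /l1_shrink l2_ge.
  have := subsolution_lam vs x; have := ler_wpM2l (ltW c_gt0) (subsolution_lam vs x).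
  nra.
- case: (lerP (v x - a) 0) => [_|].
    rewrite !mulr0 subr0 add0r; apply: le_trans (_ : 0 <= _); first by rewrite oppr_le0.
    by rewrite mulr_ge0 ?metric_ge0.
  rewrite subr_gt0 => a_lt; have l2_ge := l1_shrink x a_lt.
  have slope := ler_wpM2l (ltW c_gt0) (subsolution_slope vs x y).
  have := w_ge y; have := metric_ge0 x y; nra.
- have [x vx_lt] := subsolution_inf vs e_gt0; exists x; apply: le_lt_trans vx_lt.
  case: (lerP (v x - a) 0) => [_|_]; first by rewrite mulr0 (subsolution_ge0 vs).
  have := subsolution_ge0 vs x; nra.
Qed.

Lemma subsolution_max l v w k : (forall e, 0 < e -> exists x, l x < e) ->
  subsolution l v -> 0 < k -> (forall y z, w y - w z <= k * d y z) ->
  (forall y, v y < w y -> lam * w y + k <= l y) ->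
  subsolution l (fun y => Num.max (v y) (w y)).
Proof.
move=> l_inf vs k_gt0 w_lip w_strict.
have v_le y : v y <= Num.max (v y) (w y) by rewrite le_max lexx.
have w_le y : w y <= Num.max (v y) (w y) by rewrite le_max lexx orbT.
split=> [y t|y|y|y z|e e_gt0].
- rewrite lt_max => /orP[/(subsolution_lsc vs)[del del_gt0 Hdel]|t_lt].
    by exists del => // z /Hdel t_lt; apply: lt_le_trans t_lt (v_le z).
  exists ((w y - t) / k); first by rewrite divr_gt0 // subr_gt0.
  move=> z; rewrite ltr_pdivlMr // => dyz; apply: lt_le_trans (w_le z).
  by have := w_lip y z; rewrite (mulrC (d y z)) in dyz; lra.
- exact: le_trans (subsolution_ge0 vs y) (v_le y).
- case: (lerP (w y) (v y)) => [_|/w_strict]; first exact: subsolution_lam vs y.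
  have := mulr_ge0 lam_ge0 (ltW k_gt0); lra.
- case: (lerP (w y) (v y)) => [_|/w_strict l_ge].
    by have := subsolution_slope vs y z; have := v_le z; lra.
  have : k * d y z <= (l y - lam * w y) * d y z.
    by apply: ler_wpM2r; [exact: metric_ge0 | lra].
  by have := w_lip y z; have := w_le z; lra.
- have [x] : exists x, l x < Num.min k (e / D).
    by apply: l_inf; rewrite lt_min k_gt0 divr_gt0.
  rewrite lt_min => /andP[lx_lt_k lx_lt].
  exists x; case: (lerP (w x) (v x)) => [_|vw].
    by apply: le_lt_trans (subsolution_le vs x) _; rewrite -ltr_pdivlMr.
  have wx_ge0 : 0 <= w x by apply: le_trans (ltW vw); exact: subsolution_ge0 vs x.
  by have := w_strict x vw; have := mulr_ge0 lam_ge0 wx_ge0; lra.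
Qed.

Section PerronSupremum.
Variable l : X -> R.
Hypothesis l_ge0 : forall x, 0 <= l x.
Hypothesis l_lsc : lsc_real d l.
Hypothesis l_inf : forall e, 0 < e -> exists x, l x < e.

Definition subsolution_sup x := sup [set v x | v in subsolution l].

Lemma subsolution0 : subsolution l (fun=> 0).
Proof.
split=> [x t t_lt0|x|x|x y|e e_gt0].
- by exists 1 => // y _.
- by [].
- by rewrite mulr0.
- by rewrite subrr mulr0 subr0 mulr_ge0 ?metric_ge0.
- by have [x _] := l_inf e_gt0; exists x.
Qed.

Lemma has_sup_subsolution x : has_sup [set v x | v in subsolution l].
Proof.
split; first by exists 0, (fun=> 0) => //; exact: subsolution0.
by exists (l x * D) => _ [v vs <-]; exact: subsolution_le vs x.
Qed.

Lemma subsolution_sup_ge v x : subsolution l v -> v x <= subsolution_sup x.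
Proof. by move=> vs; apply: (sup_upper_bound (has_sup_subsolution x)); exists v. Qed.

Lemma subsolution_sup_le x : subsolution_sup x <= l x * D.
Proof.
apply: ge_sup; first by exists 0, (fun=> 0) => //; exact: subsolution0.
by move=> _ [v vs <-]; exact: subsolution_le vs x.
Qed.

Lemma subsolution_sup_adherent x e : 0 < e ->
  exists2 v, subsolution l v & subsolution_sup x - e < v x.
Proof.
by move=> e_gt0; have [_ [v vs <-] ?] := sup_adherent e_gt0 (has_sup_subsolution x); exists v.
Qed.

Notation U := subsolution_sup.

Lemma subsolution_sup_subsolution : subsolution l U.
Proof.
have U_ge0 x : 0 <= U x by exact: subsolution_sup_ge subsolution0.
split=> // [x t t_lt|x|x y|e e_gt0].
- have /(subsolution_sup_adherent x)[v vs] : 0 < U x - t by rewrite subr_gt0.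
  rewrite opprB addrCA subrr addr0 => /(subsolution_lsc vs)[del del_gt0 Hdel].
  by exists del => // y /Hdel t_lt'; apply: lt_le_trans t_lt' (subsolution_sup_ge y vs).
- apply: (ler_addgt0Mr lam_ge0) => e /(subsolution_sup_adherent x)[v vs vx_gt].
  have := subsolution_lam vs x; have := ler_wpM2l lam_ge0 (ltW vx_gt); lra.
- have c_ge0 : 0 <= lam * d x y + 1 by rewrite addr_ge0 ?mulr_ge0 ?metric_ge0.
  apply: (ler_addgt0Mr c_ge0) => e /(subsolution_sup_adherent x)[v vs vx_gt].
  have := subsolution_slope vs x y; have := subsolution_sup_ge y vs.
  have := ler_wpM2l (mulr_ge0 lam_ge0 (metric_ge0 x y)) (ltW vx_gt); nra.
- have [x lx_lt] := l_inf (divr_gt0 e_gt0 D_gt0).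
  by exists x; apply: le_lt_trans (subsolution_sup_le x) _; rewrite -ltr_pdivlMr.
Qed.

Lemma subsolution_sup_slope_ge x0 k : 0 <= k ->
  (forall y, U x0 - U y <= k * d x0 y) -> l x0 - lam * U x0 <= k.
Proof.
move=> k_ge0 U_lip; rewrite leNgt; apply/negP => k_lt.
pose eta := (l x0 - lam * U x0 - k) / 3.
have eta_gt0 : 0 < eta by rewrite divr_gt0 // subr_gt0.
have eta3 : l x0 - lam * U x0 - k = 3 * eta by rewrite /eta; lra.
have /l_lsc[rho0 rho0_gt0 l_near] : l x0 - eta < l x0 by rewrite ltrBlDr ltrDl.
pose rho := Num.min rho0 (lam + 1)^-1.
have rho_gt0 : 0 < rho by rewrite lt_min rho0_gt0 invr_gt0 ltr_wpDl.
have rho_le : rho <= rho0 by rewrite ge_min lexx.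
have lam_rho : lam * rho <= 1.
  have : rho <= (lam + 1)^-1 by rewrite ge_min lexx orbT.
  by rewrite -[_^-1]mul1r ler_pdivlMr ?ltr_wpDl //; nra.
pose cone y := U x0 + eta * rho - (k + eta) * d x0 y.
have cone_lip y z : cone y - cone z <= (k + eta) * d y z.
  have tri := metric_triangle x0 y z.
  have := ler_wpM2l (addr_ge0 k_ge0 (ltW eta_gt0)) tri; rewrite /cone; lra.
have cone_near y : U y < cone y -> d x0 y < rho.
  rewrite /cone => U_lt; have := U_lip y => U_lip_y.
  have : eta * d x0 y < eta * rho by lra.
  by rewrite ltr_pM2l.
have cone_strict y : U y < cone y -> lam * cone y + (k + eta) <= l y.
  move=> /[dup] /cone_near /lt_le_trans /(_ rho_le) /l_near ly_gt.
  have : cone y <= U x0 + eta * rho.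
    by rewrite /cone /= gerBl mulr_ge0 ?metric_ge0 // addr_ge0 // ltW.
  move=> /(ler_wpM2l lam_ge0); have : lam * (eta * rho) <= eta.
    by rewrite mulrCA ger_pMr.
  lra.
have V_sub := subsolution_max l_inf subsolution_sup_subsolution
  (ltr_wpDl k_ge0 eta_gt0) cone_lip cone_strict.
have := subsolution_sup_ge x0 V_sub; rewrite /cone metric_xx mulr0 subr0.
by rewrite ge_max lexx /= gerDl leNgt mulr_gt0.
Qed.

Lemma subsolution_sup_solution : is_solution d lam l (fun x => (U x)%:E).
Proof.
exact: subsolution_solution subsolution_sup_subsolution subsolution_sup_slope_ge.
Qed.

Lemma perron_ge_subsolution u : is_perron d lam l u ->
  forall v x, subsolution l v -> v x <= fine (u x).
Proof.
move=> [u_sol u_max] v x vs.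
have := u_max _ subsolution_sup_solution x.
rewrite (solution_fin u_sol x) lee_fin; apply: le_trans.
exact: subsolution_sup_ge vs.
Qed.

End PerronSupremum.

Lemma perron_diff_le l1 l2 u1 u2 (del a eps : R) :
  (forall x, 0 <= l2 x) -> lsc_real d l2 -> (forall e, 0 < e -> exists x, l2 x < e) ->
  is_solution d lam l1 u1 -> is_perron d lam l2 u2 -> (forall x, l1 x - eps <= l2 x) ->
  0 < del -> del < 1 -> 0 <= a -> eps * D <= del * a ->
  forall x, fine (u1 x) - fine (u2 x) <= del * fine (u1 x) + a.
Proof.
move=> l2_ge0 l2_lsc l2_inf u1_sol u2_perron l12 del_gt0 del_lt1 a_ge0 epsD x.
have := perron_ge_subsolution l2_ge0 l2_lsc l2_inf u2_perron x
  (subsolution_shrink (solution_fine_subsolution u1_sol) l2_ge0 l12 del_gt0 del_lt1 a_ge0 epsD).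
have : (1 - del) * (fine (u1 x) - a) <= (1 - del) * Num.max (fine (u1 x) - a) 0.
  by rewrite ler_pM2l ?subr_gt0 // le_max lexx.
have := mulr_ge0 (ltW del_gt0) a_ge0; lra.
Qed.

Lemma perron_stable (M e : R) : 0 <= M -> 0 < e ->
  exists2 eps, 0 < eps & forall l1 l2 u1 u2,
    (forall x, 0 <= l2 x) -> lsc_real d l2 -> (forall e, 0 < e -> exists x, l2 x < e) ->
    (forall x, l1 x <= M) -> is_solution d lam l1 u1 -> is_perron d lam l2 u2 ->
    (forall x, l1 x - eps <= l2 x) -> forall x, fine (u1 x) - fine (u2 x) < e.
Proof.
move=> M_ge0 e_gt0; pose K := M * D + 1.
have K_gt0 : 0 < K by have := mulr_ge0 M_ge0 (ltW D_gt0); rewrite /K; lra.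
pose del := Num.min (e / (4 * K)) (1 / 2).
have del_gt0 : 0 < del by rewrite lt_min !divr_gt0 // mulr_gt0.
have del_lt1 : del < 1 by rewrite gt_min; apply/orP; right; lra.
have delK : del * K <= e / 4.
  have : del <= e / (4 * K) by rewrite ge_min lexx.
  rewrite ler_pdivlMr ?mulr_gt0 // => delK4; rewrite ler_pdivlMr //; lra.
have a_ge0 : 0 <= e / 4 by rewrite divr_ge0 ?ltW.
exists (del * (e / 4) / D) => [|l1 l2 u1 u2 l2_ge0 l2_lsc l2_inf l1_le u1_sol u2_perron l12 x].
  by rewrite !divr_gt0 ?mulr_gt0.
have epsD : del * (e / 4) / D * D <= del * (e / 4) by rewrite divfK ?gt_eqF.
have := perron_diff_le l2_ge0 l2_lsc l2_inf u1_sol u2_perron l12 del_gt0 del_lt1 a_ge0 epsD x.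
have u1_le : fine (u1 x) <= K.
  apply: le_trans (solution_fine_le u1_sol x) _.
  by have := ler_wpM2r (ltW D_gt0) (l1_le x); rewrite /K; lra.
have := ler_wpM2l (ltW del_gt0) u1_le; lra.
Qed.

End Subsolutions.

Theorem theorem5p4 (R : realType) (X : Type) (d : X -> X -> R)
  (lam : R) (l : X -> R) (ln : nat -> X -> R)
  (u : X -> \bar R) (un : nat -> X -> \bar R) :
  is_metric d -> bounded_metric d -> 0 <= lam ->
  (forall x, 0 <= l x) -> (forall n x, 0 <= ln n x) ->
  lsc_real d l -> (forall n, lsc_real d (ln n)) ->
  ereal_inf (range (fun x => (l x)%:E)) = 0%E ->
  (forall n, ereal_inf (range (fun x => (ln n x)%:E)) = 0%E) ->
  (exists M : R, forall x, l x <= M) ->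
  is_perron d lam l u -> (forall n, is_perron d lam (ln n) (un n)) ->
  unif_conv_real ln l -> unif_conv_ext un u.
Proof.
move=> d_metric /bounded_metric_pos[D D_gt0 d_le_D] lam_ge0 l_ge0 ln_ge0 l_lsc ln_lsc.
move=> /ereal_inf_range_eq0P[_ l_inf] ln_inf [M l_le_M] u_perron un_perron ln_cvg e e_gt0.
have M1_ge0 : 0 <= M + 1.
  by have [x _] := l_inf 1 ltr01; rewrite addr_ge0 // (le_trans (l_ge0 x) (l_le_M x)).
have [eps eps_gt0 stable] := perron_stable d_metric lam_ge0 D_gt0 d_le_D M1_ge0 e_gt0.
have /ln_cvg[N ln_near] : 0 < Num.min eps 1 by rewrite lt_min eps_gt0 ltr01.
exists N => n /ln_near {}ln_near x.
have [ln_ge ln_le l_le_M1 ln_le_M1] : [/\ forall y, l y - eps <= ln n y,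
    forall y, ln n y - eps <= l y, forall y, l y <= M + 1 & forall y, ln n y <= M + 1].
  split=> y; have := l_le_M y; have := ln_near y;
    by rewrite lt_min !ltr_norml => /andP[/andP[? ?] /andP[? ?]]; lra.
have ln_inf' := (ereal_inf_range_eq0P _).1 (ln_inf n).
have [u_sol un_sol] := (u_perron.1, (un_perron n).1).
have := stable _ _ _ _ (ln_ge0 n) (ln_lsc n) ln_inf'.2 l_le_M1 u_sol (un_perron n) ln_ge x.
have := stable _ _ _ _ l_ge0 l_lsc l_inf ln_le_M1 un_sol u_perron ln_le x.
rewrite (solution_fin lam_ge0 u_sol x) (solution_fin lam_ge0 un_sol x).
by rewrite -EFinB abse_EFin lte_fin ltr_norml => ? ?; apply/andP; split; lra.
Qed.
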